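(* For finite simple graphs $G$ and $H$ with disjoint vertex sets, $\mathrm{mur}(G\cup H)\le \mathrm{mur}(G)+|V(H)|+1$.
   Context: For a finite simple undirected graph $G$ on vertices $v_1,\dots,v_n$, let $A_G$ be its $(0,1)$-adjacency matrix, $D_G=\mathrm{diag}(d_1,\dots,d_n)$ with $d_i$ the degree of $v_i$, $I$ the $n\times n$ identity matrix and $J$ the $n\times n$ all-ones matrix. A universal adjacency matrix of $G$ is any matrix $\alpha A_G+\beta I+\gamma J+\delta D_G$ with real scalars $\alpha,\beta,\gamma,\delta$ and $\alpha\neq 0$. The minimum universal rank $\mathrm{mur}(G)$ is the minimum rank over all universal adjacency matrices of $G$. The union $G\cup H$ is the graph with vertex set $V(G)\cup V(H)$ and edge set $E(G)\cup E(H)$. *)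

From HB Require Import structures.
From mathcomp Require Import all_boot all_order all_algebra.
From mathcomp Require Import boolp reals.
Set Implicit Arguments. Unset Strict Implicit. Unset Printing Implicit Defensive.
Import Order.TTheory GRing.Theory Num.Theory.
Local Open Scope ring_scope.

Definition simple_graph (T : finType) (e : rel T) : Prop :=
  symmetric e /\ irreflexive e.

Definition adjmx (R : realType) (T : finType) (e : rel T) : 'M[R]_#|T| :=
  \matrix_(i, j) (e (enum_val i) (enum_val j))%:R.

Definition deg (T : finType) (e : rel T) (x : T) : nat := #|[set y | e x y]|.

Definition degmx (R : realType) (T : finType) (e : rel T) : 'M[R]_#|T| :=
  diag_mx (\row_i (deg e (enum_val i))%:R).

Definition univ_adj (R : realType) (T : finType) (e : rel T)
    (alpha beta gamma delta : R) : 'M[R]_#|T| :=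
  alpha *: adjmx R e + beta%:M + gamma *: const_mx 1 + delta *: degmx R e.

Definition mur_pred (R : realType) (T : finType) (e : rel T) : pred nat :=
  fun r => `[< exists alpha beta gamma delta : R,
                 alpha != 0 /\ \rank (univ_adj e alpha beta gamma delta) = r >].

Lemma mur_exists (R : realType) (T : finType) (e : rel T) :
  exists r, mur_pred R e r.
Proof.
exists (\rank (univ_adj e (1 : R) 0 0 0)); apply/asboolP.
by exists 1, 0, 0, 0; split; [exact: oner_neq0|].
Qed.

Definition mur (R : realType) (T : finType) (e : rel T) : nat :=
  ex_minn (mur_exists R e).

(* union of graphs on disjoint vertex sets: vertex type is the sum type *)
Definition union_rel (T1 T2 : finType) (e1 : rel T1) (e2 : rel T2) : rel (T1 + T2) :=
  fun x y => match x, y with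
             | inl a, inl b => e1 a b
             | inr a, inr b => e2 a b
             | _, _ => false
             end.

From HB Require Import structures.
From mathcomp Require Import all_boot all_order all_algebra.
From mathcomp Require Import boolp reals ring.

Set Implicit Arguments. Unset Strict Implicit. Unset Printing Implicit Defensive.
Import Order.TTheory GRing.Theory Num.Theory.

(* Take an optimal universal matrix M = aA + bI + cJ + dD of G and the matrix
   M' with the same coefficients for G u H.  The rows of M' indexed by V(G)
   are [M | cJ], of rank at most rank M + 1, and the remaining |V(H)| rows
   contribute at most |V(H)| to the rank. *)

Local Open Scope ring_scope.

Section SumEmbedding.
Variables (R : fieldType) (T1 T2 : finType).

Definition inl_mx : 'M[R]_(#|T1|, #|{: T1 + T2}|) :=
  \matrix_(a, j) (enum_val j == inl (enum_val a))%:R.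

Definition inr_mx : 'M[R]_(#|T2|, #|{: T1 + T2}|) :=
  \matrix_(b, j) (enum_val j == inr (enum_val b))%:R.

Lemma mul_inl_mx m (M : 'M[R]_(m, #|T1|)) k j :
  (M *m inl_mx) k j = if enum_val j is inl a then M k (enum_rank a) else 0.
Proof.
rewrite mxE; under eq_bigr do rewrite mxE; case: (enum_val j) => [a|b].
  rewrite (bigD1 (enum_rank a)) //= enum_rankK eqxx mulr1 big1 ?addr0 // => a' ne_a'.
  by rewrite (inj_eq inl_inj) -(inj_eq enum_rank_inj) enum_valK eq_sym (negPf ne_a') mulr0.
by rewrite big1 // => a' _; rewrite mulr0.
Qed.

Lemma mul_inr_mx m (M : 'M[R]_(m, #|T2|)) k j :
  (M *m inr_mx) k j = if enum_val j is inr b then M k (enum_rank b) else 0.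
Proof.
rewrite mxE; under eq_bigr do rewrite mxE; case: (enum_val j) => [a|b].
  by rewrite big1 // => b' _; rewrite mulr0.
rewrite (bigD1 (enum_rank b)) //= enum_rankK eqxx mulr1 big1 ?addr0 // => b' ne_b'.
by rewrite (inj_eq inr_inj) -(inj_eq enum_rank_inj) enum_valK eq_sym (negPf ne_b') mulr0.
Qed.

Lemma inl_mx_mul p (M : 'M[R]_(#|{: T1 + T2}|, p)) a k :
  (inl_mx *m M) a k = M (enum_rank (inl (enum_val a))) k.
Proof.
rewrite mxE (bigD1 (enum_rank (inl (enum_val a)))) //= mxE enum_rankK eqxx mul1r.
rewrite big1 ?addr0 // => j ne_j; rewrite mxE -(inj_eq enum_rank_inj) enum_valK.
by rewrite (negPf ne_j) mul0r.
Qed.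

Lemma inl_inr_mx_resolution : inl_mx^T *m inl_mx + inr_mx^T *m inr_mx = 1%:M.
Proof.
apply/matrixP => i j; rewrite [LHS]mxE mul_inl_mx mul_inr_mx !mxE.
rewrite -(inj_eq enum_val_inj).
by case: (enum_val j) => [a|b]; rewrite ?addr0 ?add0r !mxE enum_rankK.
Qed.

Lemma mxrank_sum_split p (M : 'M[R]_(#|{: T1 + T2}|, p)) :
  (\rank M <= \rank (inl_mx *m M) + \rank (inr_mx *m M))%N.
Proof.
have decompM : M = inl_mx^T *m (inl_mx *m M) + inr_mx^T *m (inr_mx *m M).
  by rewrite !mulmxA -mulmxDl inl_inr_mx_resolution mul1mx.
rewrite {1}decompM; apply: leq_trans (mxrank_add _ _) _.
by apply: leq_add; apply: mxrankM_maxr.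
Qed.

End SumEmbedding.

Section UniversalAdjacency.
Variables (R : realType) (T : finType) (e : rel T).

Lemma univ_adj_enum_rank (alpha beta gamma delta : R) x y :
  univ_adj e alpha beta gamma delta (enum_rank x) (enum_rank y) =
  alpha * (e x y)%:R + (x == y)%:R * (beta + delta * (deg e x)%:R) + gamma.
Proof.
rewrite !mxE !enum_rankK (inj_eq enum_rank_inj).
by case: eqP => [->|_]; rewrite ?mulr1n ?mulr0n ?mulr1 ?mul1r ?mul0r; ring.
Qed.

Lemma mur_le (alpha beta gamma delta : R) : alpha != 0 ->
  (mur R e <= \rank (univ_adj e alpha beta gamma delta))%N.
Proof.
move=> alpha_neq0; rewrite /mur; case: ex_minnP => r _; apply.
by apply/asboolP; exists alpha, beta, gamma, delta.
Qed.

Lemma mur_attained : exists alpha beta gamma delta : R,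
  alpha != 0 /\ \rank (univ_adj e alpha beta gamma delta) = mur R e.
Proof. by rewrite /mur; case: ex_minnP => r /asboolP. Qed.

End UniversalAdjacency.

Section UnionGraph.
Variables (R : realType) (T1 T2 : finType) (g : rel T1) (h : rel T2).

Lemma deg_union_inl a : deg (union_rel g h) (inl a) = deg g a.
Proof.
rewrite /deg -(card_imset _ (@inl_inj T1 T2)); apply: eq_card => -[y|y].
  by rewrite !inE mem_imset ?inE //; exact: inl_inj.
by rewrite !inE; apply/esym/imsetP => -[z _].
Qed.

Lemma univ_adj_union_inl_rows (alpha beta gamma delta : R) :
  inl_mx R T1 T2 *m univ_adj (union_rel g h) alpha beta gamma delta =
  univ_adj g alpha beta gamma delta *m inl_mx R T1 T2 +
  ((const_mx gamma : 'M_(#|T1|, 1)) *m const_mx 1) *m inr_mx R T1 T2.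
Proof.
apply/matrixP => i j; rewrite -[i]enum_valK -[j]enum_valK.
move: (enum_val i) (enum_val j) => {i j} x y.
rewrite inl_mx_mul [RHS]mxE mul_inl_mx mul_inr_mx !enum_rankK !univ_adj_enum_rank.
case: y => [y|y] /=.
  by rewrite univ_adj_enum_rank deg_union_inl (inj_eq inl_inj) addr0.
by rewrite mxE big_ord1 !mxE mulr0 mul0r !add0r mulr1.
Qed.

End UnionGraph.

Theorem theorem16 (R : realType) (T1 T2 : finType) (g : rel T1) (h : rel T2) :
  simple_graph g -> simple_graph h ->
  (mur R (union_rel g h) <= mur R g + #|T2| + 1)%N.
Proof.
move=> _ _.
have [alpha [beta [gamma [delta [alpha_neq0 <-]]]]] := mur_attained R g.
apply: leq_trans (mur_le (union_rel g h) beta gamma delta alpha_neq0) _.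
apply: leq_trans (mxrank_sum_split (T1 := T1) (T2 := T2) _) _.
rewrite univ_adj_union_inl_rows addnAC leq_add //; last first.
  exact: leq_trans (mxrankM_maxl _ _) (rank_leq_row _).
apply: leq_trans (mxrank_add _ _) _; apply: leq_add; first exact: mxrankM_maxl.
by rewrite -!mulmxA; apply: leq_trans (mxrankM_maxl _ _) (rank_leq_col _).
Qed.
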